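(* Let $|\mathcal{T}|=2$, $|\mathcal{X}|\ge2$, $|\mathcal{Y}|\ge2$, and let $P\in\Delta_{\mathcal{T},\mathcal{X},\mathcal{Y}}$ be such that $\operatorname{supp}(\Delta_P)=\mathcal{T}\times\mathcal{X}\times\mathcal{Y}$. Let $\tilde Q$ lie in the relative interior of $\Delta_P$ with $\tilde Q\in\arg\max_{Q\in\Delta_P}H_Q(T\mid X,Y)$. Then the maximizer is not unique if either $UI(T:X\setminus Y)=0$ and $|\mathcal{Y}|>2$, or $UI(T:Y\setminus X)=0$ and $|\mathcal{X}|>2$.
   Context: $T,X,Y$ are random variables with finite state spaces $\mathcal{T},\mathcal{X},\mathcal{Y}$; $\Delta_{\mathcal{T},\mathcal{X},\mathcal{Y}}$ is the set of all joint distributions on $\mathcal{T}\times\mathcal{X}\times\mathcal{Y}$. For $P\in\Delta_{\mathcal{T},\mathcal{X},\mathcal{Y}}$, $\Delta_P=\{Q\in\Delta_{\mathcal{T},\mathcal{X},\mathcal{Y}}: Q(X=x,T=t)=P(X=x,T=t),\ Q(Y=y,T=t)=P(Y=y,T=t)\ \forall x,y,t\}$ and $\operatorname{supp}(\Delta_P)=\bigcup_{Q\in\Delta_P}\operatorname{supp}(Q)$. $UI(T:X\setminus Y)=\min_{Q\in\Delta_P}I_Q(T:X\mid Y)$ and $UI(T:Y\setminus X)=\min_{Q\in\Delta_P}I_Q(T:Y\mid X)$; $UI(T:X\setminus Y)=0$ holds iff $T$ is conditionally independent of $X$ given $Y$ under some (any) maximizer. *)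

From Stdlib Require Import Reals List.
Import ListNotations.
Open Scope R_scope.

(* State spaces: T = {0,1}, X = {0,..,nx-1}, Y = {0,..,ny-1}.
   A joint distribution is a function Q t x y (values outside the range are
   irrelevant and never inspected). *)
Definition jfun := nat -> nat -> nat -> R.

Fixpoint rsum (n : nat) (f : nat -> R) : R :=
  match n with
  | O => 0
  | S k => rsum k f + f k
  end.

Definition nT : nat := 2.

Definition in_dom (nx ny : nat) (t x y : nat) : Prop :=
  (t < nT)%nat /\ (x < nx)%nat /\ (y < ny)%nat.

Definition is_dist (nx ny : nat) (Q : jfun) : Prop :=
  (forall t x y, in_dom nx ny t x y -> 0 <= Q t x y) /\
  rsum nT (fun t => rsum nx (fun x => rsum ny (fun y => Q t x y))) = 1.

Definition mTX (ny : nat) (Q : jfun) (t x : nat) : R := rsum ny (fun y => Q t x y).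
Definition mTY (nx : nat) (Q : jfun) (t y : nat) : R := rsum nx (fun x => Q t x y).
Definition mXY (Q : jfun) (x y : nat) : R := rsum nT (fun t => Q t x y).
Definition mX (ny : nat) (Q : jfun) (x : nat) : R :=
  rsum nT (fun t => rsum ny (fun y => Q t x y)).
Definition mY (nx : nat) (Q : jfun) (y : nat) : R :=
  rsum nT (fun t => rsum nx (fun x => Q t x y)).

Definition DeltaP (nx ny : nat) (P Q : jfun) : Prop :=
  is_dist nx ny Q /\
  (forall t x, (t < nT)%nat -> (x < nx)%nat -> mTX ny Q t x = mTX ny P t x) /\
  (forall t y, (t < nT)%nat -> (y < ny)%nat -> mTY nx Q t y = mTY nx P t y).

(* supp(Delta_P) = T x X x Y *)
Definition full_supp (nx ny : nat) (P : jfun) : Prop :=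
  forall t x y, in_dom nx ny t x y -> exists Q, DeltaP nx ny P Q /\ 0 < Q t x y.

(* convention 0 * log(...) = 0 *)
Definition plog (a r : R) : R :=
  if Rle_dec a 0 then 0 else a * ln r.

Definition sum3 (nx ny : nat) (f : nat -> nat -> nat -> R) : R :=
  rsum nT (fun t => rsum nx (fun x => rsum ny (fun y => f t x y))).

Definition condH (nx ny : nat) (Q : jfun) : R :=
  - sum3 nx ny (fun t x y => plog (Q t x y) (Q t x y / mXY Q x y)).

Definition CMI_TX_Y (nx ny : nat) (Q : jfun) : R :=
  sum3 nx ny (fun t x y =>
    plog (Q t x y) (Q t x y * mY nx Q y / (mTY nx Q t y * mXY Q x y))).

Definition CMI_TY_X (nx ny : nat) (Q : jfun) : R :=
  sum3 nx ny (fun t x y =>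
    plog (Q t x y) (Q t x y * mX ny Q x / (mTX ny Q t x * mXY Q x y))).

Definition is_min_over (nx ny : nat) (P : jfun) (f : jfun -> R) (u : R) : Prop :=
  (exists Q, DeltaP nx ny P Q /\ f Q = u) /\
  (forall Q, DeltaP nx ny P Q -> u <= f Q).

Definition UI_X_minus_Y (nx ny : nat) (P : jfun) (u : R) : Prop :=
  is_min_over nx ny P (CMI_TX_Y nx ny) u.
Definition UI_Y_minus_X (nx ny : nat) (P : jfun) (u : R) : Prop :=
  is_min_over nx ny P (CMI_TY_X nx ny) u.

Definition in_aff_DeltaP (nx ny : nat) (P R0 : jfun) : Prop :=
  exists l : list (R * jfun),
    (forall p, In p l -> DeltaP nx ny P (snd p)) /\
    fold_right (fun p s => fst p + s) 0 l = 1 /\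
    (forall t x y, in_dom nx ny t x y ->
       R0 t x y = fold_right (fun p s => fst p * snd p t x y + s) 0 l).

Definition in_relint_DeltaP (nx ny : nat) (P Q : jfun) : Prop :=
  DeltaP nx ny P Q /\
  exists eps, 0 < eps /\
    forall R0, in_aff_DeltaP nx ny P R0 ->
      (forall t x y, in_dom nx ny t x y -> Rabs (R0 t x y - Q t x y) < eps) ->
      DeltaP nx ny P R0.

Definition is_argmax_condH (nx ny : nat) (P Q : jfun) : Prop :=
  DeltaP nx ny P Q /\ forall Q', DeltaP nx ny P Q' -> condH nx ny Q' <= condH nx ny Q.

(* Since H(T|X,Y) + I(T:X|Y) = H(T|Y) depends only on the (T,Y)-marginal, the
   maximizers of H(T|X,Y) over Delta_P are the minimizers of I(T:X|Y); when
   UI(T:X\Y) = 0 these are exactly the Q in Delta_P under which T and X are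
   conditionally independent given Y.  A maximizer in the relative interior of a
   fully supported Delta_P is strictly positive, so it factorizes as
   Q(t,x,y) = Q(t|y) Q(x,y).  Perturbing the (X,Y)-marginal in a direction
   u(x) v(y) with sum_x u = 0, sum_y v = 0 and sum_y Q(0|y) v(y) = 0 keeps both
   (T,X)- and (T,Y)-marginals and the factorized form; such a v != 0 exists as
   soon as |Y| >= 3.  The case UI(T:Y\X) = 0 follows by exchanging X and Y. *)

From Stdlib Require Import Reals Lra Lia List.
Import ListNotations.
Open Scope R_scope.

Lemma rsum_ext n f g : (forall k, (k < n)%nat -> f k = g k) -> rsum n f = rsum n g.
Proof.
  induction n as [|n IH]; simpl; intros H; [reflexivity|].
  rewrite IH by (intros; apply H; lia). rewrite H by lia. reflexivity.
Qed.

Lemma rsum_plus n f g : rsum n (fun k => f k + g k) = rsum n f + rsum n g.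
Proof. induction n as [|n IH]; simpl; [lra|]. rewrite IH; ring. Qed.

Lemma rsum_minus n f g : rsum n (fun k => f k - g k) = rsum n f - rsum n g.
Proof. induction n as [|n IH]; simpl; [lra|]. rewrite IH; ring. Qed.

Lemma rsum_scal n c f : rsum n (fun k => c * f k) = c * rsum n f.
Proof. induction n as [|n IH]; simpl; [lra|]. rewrite IH; ring. Qed.

Lemma rsum_scalr n c f : rsum n (fun k => f k * c) = rsum n f * c.
Proof. induction n as [|n IH]; simpl; [lra|]. rewrite IH; ring. Qed.

Lemma rsum_const0 n : rsum n (fun _ => 0) = 0.
Proof. induction n as [|n IH]; simpl; [lra|]. rewrite IH; ring. Qed.

Lemma rsum_swap n m f :
  rsum n (fun i => rsum m (fun j => f i j)) = rsum m (fun j => rsum n (fun i => f i j)).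
Proof.
  induction n as [|n IH]; simpl.
  - symmetry; apply rsum_const0.
  - rewrite IH, <- rsum_plus; reflexivity.
Qed.

Lemma rsum_support n m f :
  (m <= n)%nat -> (forall k, (m <= k)%nat -> f k = 0) -> rsum n f = rsum m f.
Proof.
  intros Hmn Hf; induction Hmn as [|n Hmn IH]; simpl; [reflexivity|].
  rewrite IH, (Hf n Hmn); ring.
Qed.

Lemma rsum_nonneg n f : (forall k, (k < n)%nat -> 0 <= f k) -> 0 <= rsum n f.
Proof.
  induction n as [|n IH]; simpl; intros H; [lra|].
  pose proof (IH (fun k Hk => H k ltac:(lia))); pose proof (H n ltac:(lia)); lra.
Qed.

Lemma term_le_rsum n f k :
  (forall i, (i < n)%nat -> 0 <= f i) -> (k < n)%nat -> f k <= rsum n f.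
Proof.
  induction n as [|n IH]; intros H Hk; [lia|]; simpl.
  pose proof (rsum_nonneg n f (fun i Hi => H i ltac:(lia))); pose proof (H n ltac:(lia)).
  destruct (Nat.eq_dec k n) as [->|Hne]; [lra|].
  pose proof (IH (fun i Hi => H i ltac:(lia)) ltac:(lia)); lra.
Qed.

Lemma rsum_eq0_nonneg n f :
  (forall i, (i < n)%nat -> 0 <= f i) -> rsum n f = 0 -> forall k, (k < n)%nat -> f k = 0.
Proof.
  intros H Hs k Hk. pose proof (term_le_rsum n f k H Hk). pose proof (H k Hk). lra.
Qed.

Definition nonneg_on nx ny (Q : jfun) : Prop :=
  forall t x y, in_dom nx ny t x y -> 0 <= Q t x y.

Definition pos_on nx ny (Q : jfun) : Prop :=
  forall t x y, in_dom nx ny t x y -> 0 < Q t x y.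

Lemma sum3_ext nx ny f g :
  (forall t x y, in_dom nx ny t x y -> f t x y = g t x y) -> sum3 nx ny f = sum3 nx ny g.
Proof.
  intros H; unfold sum3.
  apply rsum_ext; intros t Ht; apply rsum_ext; intros x Hx; apply rsum_ext; intros y Hy.
  apply H; repeat split; assumption.
Qed.

Lemma sum3_plus nx ny f g :
  sum3 nx ny f + sum3 nx ny g = sum3 nx ny (fun t x y => f t x y + g t x y).
Proof.
  unfold sum3; rewrite <- rsum_plus; apply rsum_ext; intros.
  rewrite <- rsum_plus; apply rsum_ext; intros. rewrite <- rsum_plus; reflexivity.
Qed.

Lemma sum3_minus nx ny f g :
  sum3 nx ny f - sum3 nx ny g = sum3 nx ny (fun t x y => f t x y - g t x y).
Proof.
  unfold sum3; rewrite <- rsum_minus; apply rsum_ext; intros.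
  rewrite <- rsum_minus; apply rsum_ext; intros. rewrite <- rsum_minus; reflexivity.
Qed.

Lemma sum3_const0 nx ny : sum3 nx ny (fun _ _ _ => 0) = 0.
Proof.
  unfold sum3; rewrite (rsum_ext nT _ (fun _ => 0)); [apply rsum_const0|intros].
  rewrite (rsum_ext nx _ (fun _ => 0)); [apply rsum_const0|intros]. apply rsum_const0.
Qed.

Lemma sum3_swapYX nx ny f :
  sum3 nx ny f = rsum nT (fun t => rsum ny (fun y => rsum nx (fun x => f t x y))).
Proof. apply rsum_ext; intros; apply rsum_swap. Qed.

Lemma sum3_eq0_nonneg nx ny f :
  nonneg_on nx ny f -> sum3 nx ny f = 0 -> forall t x y, in_dom nx ny t x y -> f t x y = 0.
Proof.
  intros H Hs t x y (Ht & Hx & Hy).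
  assert (Hf : forall t x y, (t < nT)%nat -> (x < nx)%nat -> (y < ny)%nat -> 0 <= f t x y)
    by (intros; apply H; repeat split; assumption).
  assert (Ht0 : rsum nx (fun x => rsum ny (fun y => f t x y)) = 0).
  { apply (rsum_eq0_nonneg nT (fun t => rsum nx (fun x => rsum ny (fun y => f t x y)))); auto.
    intros; apply rsum_nonneg; intros; apply rsum_nonneg; auto. }
  assert (Hx0 : rsum ny (fun y => f t x y) = 0).
  { apply (rsum_eq0_nonneg nx (fun x => rsum ny (fun y => f t x y))); auto.
    intros; apply rsum_nonneg; auto. }
  exact (rsum_eq0_nonneg ny (fun y => f t x y) ltac:(auto) Hx0 y Hy).
Qed.

Lemma mY_split nx (Q : jfun) y : mY nx Q y = mTY nx Q 0 y + mTY nx Q 1 y.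
Proof. unfold mY, mTY, nT; simpl; ring. Qed.

Section Marginals.
Variables (nx ny : nat) (Q : jfun).
Hypothesis HQ : nonneg_on nx ny Q.

Lemma le_mTY t x y : in_dom nx ny t x y -> Q t x y <= mTY nx Q t y.
Proof.
  intros (Ht & Hx & Hy); apply (term_le_rsum nx (fun x => Q t x y)); [|assumption].
  intros; apply HQ; repeat split; assumption.
Qed.

Lemma le_mXY t x y : in_dom nx ny t x y -> Q t x y <= mXY Q x y.
Proof.
  intros (Ht & Hx & Hy); apply (term_le_rsum nT (fun t => Q t x y)); [|assumption].
  intros; apply HQ; repeat split; assumption.
Qed.

Lemma le_mY t x y : in_dom nx ny t x y -> Q t x y <= mY nx Q y.
Proof.
  intros Hd; pose proof (le_mTY t x y Hd) as Hle; rewrite mY_split.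
  destruct Hd as (Ht & Hx & Hy).
  assert (0 <= mTY nx Q 0 y /\ 0 <= mTY nx Q 1 y) as [].
  { split; apply rsum_nonneg; intros; apply HQ; repeat split; unfold nT; auto. }
  unfold nT in Ht; destruct t as [|[|t]]; [lra | lra | lia].
Qed.

Lemma le_sum3 t x y : in_dom nx ny t x y -> Q t x y <= sum3 nx ny Q.
Proof.
  intros Hd; pose proof (le_mTY t x y Hd) as Hle.
  destruct Hd as (Ht & Hx & Hy); unfold sum3.
  assert (Hsum : forall t x, (t < nT)%nat -> (x < nx)%nat -> 0 <= rsum ny (fun y => Q t x y))
    by (intros; apply rsum_nonneg; intros; apply HQ; repeat split; assumption).
  eapply Rle_trans; [apply (term_le_rsum ny (fun y => Q t x y)); auto|].
  { intros; apply HQ; repeat split; assumption. }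
  eapply Rle_trans; [apply (term_le_rsum nx (fun x => rsum ny (fun y => Q t x y))); auto|].
  apply (term_le_rsum nT (fun t => rsum nx (fun x => rsum ny (fun y => Q t x y)))); auto.
  intros; apply rsum_nonneg; auto.
Qed.

Lemma marginals_pos t x y : in_dom nx ny t x y -> 0 < Q t x y ->
  0 < mY nx Q y /\ 0 < mTY nx Q t y /\ 0 < mXY Q x y.
Proof.
  intros Hd Hp.
  pose proof (le_mY t x y Hd); pose proof (le_mTY t x y Hd); pose proof (le_mXY t x y Hd).
  repeat split; lra.
Qed.

End Marginals.

Lemma DeltaP_nonneg nx ny P Q : DeltaP nx ny P Q -> nonneg_on nx ny Q.
Proof. intros [[H _] _]; exact H. Qed.

Lemma ln_div x y : 0 < x -> 0 < y -> ln (x / y) = ln x - ln y.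
Proof.
  intros; unfold Rdiv; rewrite ln_mult, ln_Rinv; try lra.
  apply Rinv_0_lt_compat; lra.
Qed.

(* H_Q(T | Y); a summand with mTY = 0 is 0 * ln _ = 0, matching the convention 0 log 0 = 0 *)
Definition condH_TY nx ny (Q : jfun) : R :=
  rsum nT (fun t => rsum ny (fun y => mTY nx Q t y * ln (mY nx Q y / mTY nx Q t y))).

Lemma plog_ratio_sub q a b c : 0 <= q -> (0 < q -> 0 < a /\ 0 < b /\ 0 < c) ->
  plog q (q * a / (b * c)) - plog q (q / c) = q * ln (a / b).
Proof.
  intros Hq Hp; unfold plog; destruct (Rle_dec q 0).
  - replace q with 0 by lra; ring.
  - destruct (Hp ltac:(lra)) as (Ha & Hb & Hc).
    rewrite !ln_div, !ln_mult; try lra; apply Rmult_lt_0_compat; lra.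
Qed.

Lemma condH_add_CMI_TX_Y nx ny Q : nonneg_on nx ny Q ->
  condH nx ny Q + CMI_TX_Y nx ny Q = condH_TY nx ny Q.
Proof.
  intros HQ; unfold condH, CMI_TX_Y, condH_TY.
  rewrite Rplus_comm; change (?b + - ?a) with (b - a); rewrite sum3_minus.
  rewrite (sum3_ext _ _ _ (fun t x y => Q t x y * ln (mY nx Q y / mTY nx Q t y))).
  - rewrite sum3_swapYX; apply rsum_ext; intros t Ht; apply rsum_ext; intros y Hy.
    apply rsum_scalr.
  - intros t x y Hd; apply plog_ratio_sub; [apply HQ; assumption|].
    intros Hp; destruct (marginals_pos nx ny Q HQ t x y Hd Hp) as (? & ? & ?).
    pose proof (le_mXY nx ny Q HQ t x y Hd); repeat split; lra.
Qed.

Lemma condH_TY_DeltaP nx ny P Q : DeltaP nx ny P Q -> condH_TY nx ny Q = condH_TY nx ny P.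
Proof.
  intros (_ & _ & HY); unfold condH_TY.
  apply rsum_ext; intros t Ht; apply rsum_ext; intros y Hy.
  rewrite !mY_split, !HY by (unfold nT; lia || assumption). reflexivity.
Qed.

Lemma argmax_condH_of_CMI_eq0 nx ny P Q :
  UI_X_minus_Y nx ny P 0 -> DeltaP nx ny P Q -> CMI_TX_Y nx ny Q = 0 ->
  is_argmax_condH nx ny P Q.
Proof.
  intros [_ Hmin] HD HC; split; [assumption|]; intros Q' HD'.
  pose proof (condH_add_CMI_TX_Y nx ny Q (DeltaP_nonneg _ _ _ _ HD)).
  pose proof (condH_add_CMI_TX_Y nx ny Q' (DeltaP_nonneg _ _ _ _ HD')).
  rewrite (condH_TY_DeltaP _ _ _ _ HD) in *; rewrite (condH_TY_DeltaP _ _ _ _ HD') in *.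
  pose proof (Hmin Q' HD'); lra.
Qed.

Lemma CMI_eq0_of_argmax_condH nx ny P Q :
  UI_X_minus_Y nx ny P 0 -> is_argmax_condH nx ny P Q -> CMI_TX_Y nx ny Q = 0.
Proof.
  intros [[Q0 [HD0 HC0]] Hmin] [HD Hmax].
  pose proof (condH_add_CMI_TX_Y nx ny Q (DeltaP_nonneg _ _ _ _ HD)).
  pose proof (condH_add_CMI_TX_Y nx ny Q0 (DeltaP_nonneg _ _ _ _ HD0)).
  rewrite (condH_TY_DeltaP _ _ _ _ HD) in *; rewrite (condH_TY_DeltaP _ _ _ _ HD0) in *.
  pose proof (Hmax Q0 HD0); pose proof (Hmin Q HD); lra.
Qed.

Lemma ln_le_sub1 u : 0 < u -> ln u <= u - 1.
Proof. intros Hu; pose proof (exp_ineq1_le (ln u)) as H; rewrite exp_ln in H; lra. Qed.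

Lemma ln_lt_sub1 u : 0 < u -> u <> 1 -> ln u < u - 1.
Proof.
  intros Hu Hne; pose proof (exp_ineq1 (ln u) (ln_neq_0 u Hne Hu)) as H.
  rewrite exp_ln in H; lra.
Qed.

Lemma gibbs_le q r : 0 < q -> 0 < r -> q - r <= q * ln (q / r).
Proof.
  intros Hq Hr; rewrite ln_div by assumption.
  pose proof (ln_le_sub1 (r / q) ltac:(apply Rdiv_lt_0_compat; lra)) as H.
  rewrite ln_div in H by assumption.
  assert (q * (ln r - ln q) <= q * (r / q - 1)) by (apply Rmult_le_compat_l; lra).
  replace (q * (r / q - 1)) with (r - q) in * by (field; lra); lra.
Qed.

Lemma gibbs_eq q r : 0 < q -> 0 < r -> q * ln (q / r) = q - r -> q = r.
Proof.
  intros Hq Hr Heq; destruct (Req_dec (r / q) 1) as [E|E].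
  - replace r with (r / q * q) by (field; lra); rewrite E; ring.
  - pose proof (ln_lt_sub1 (r / q) ltac:(apply Rdiv_lt_0_compat; lra) E) as H.
    rewrite ln_div in H, Heq by assumption.
    assert (q * (ln r - ln q) < q * (r / q - 1)) by (apply Rmult_lt_compat_l; lra).
    replace (q * (r / q - 1)) with (r - q) in * by (field; lra); lra.
Qed.

Lemma sum3_kl_eq0 nx ny (Q R : jfun) :
  pos_on nx ny Q -> pos_on nx ny R -> sum3 nx ny Q = sum3 nx ny R ->
  sum3 nx ny (fun t x y => Q t x y * ln (Q t x y / R t x y)) = 0 ->
  forall t x y, in_dom nx ny t x y -> Q t x y = R t x y.
Proof.
  intros HQ HR Hs Hkl.
  pose (e := fun t x y => Q t x y * ln (Q t x y / R t x y) - Q t x y + R t x y).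
  assert (He : nonneg_on nx ny e).
  { intros t x y Hd; unfold e; pose proof (gibbs_le _ _ (HQ t x y Hd) (HR t x y Hd)); lra. }
  assert (Hse : sum3 nx ny e = 0).
  { unfold e; rewrite <- sum3_plus, <- sum3_minus, Hkl, Hs; ring. }
  intros t x y Hd; apply gibbs_eq; [apply HQ | apply HR | ]; try assumption.
  pose proof (sum3_eq0_nonneg nx ny e He Hse t x y Hd); unfold e in *; lra.
Qed.

(* T and X are conditionally independent given Y, in cross-multiplied form *)
Definition ci_TX_Y nx ny (Q : jfun) : Prop :=
  forall t x y, in_dom nx ny t x y -> Q t x y * mY nx Q y = mTY nx Q t y * mXY Q x y.

Lemma CMI_TX_Y_eq0_of_ci nx ny Q : nonneg_on nx ny Q -> ci_TX_Y nx ny Q -> CMI_TX_Y nx ny Q = 0.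
Proof.
  intros HQ Hci; unfold CMI_TX_Y; rewrite <- (sum3_const0 nx ny); apply sum3_ext.
  intros t x y Hd; unfold plog; destruct (Rle_dec (Q t x y) 0) as [|Hp]; [reflexivity|].
  destruct (marginals_pos nx ny Q HQ t x y Hd ltac:(lra)) as (? & ? & ?).
  rewrite Hci by assumption.
  replace (mTY nx Q t y * mXY Q x y / (mTY nx Q t y * mXY Q x y)) with 1 by (field; lra).
  rewrite ln_1; ring.
Qed.

Lemma ci_of_CMI_TX_Y_eq0 nx ny Q :
  is_dist nx ny Q -> pos_on nx ny Q -> CMI_TX_Y nx ny Q = 0 -> ci_TX_Y nx ny Q.
Proof.
  intros [HQ Hs] Hp HC.
  assert (Hnx : (0 < nx)%nat) by (destruct nx; [unfold nT in Hs; simpl in Hs; lra | lia]).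
  pose (R := fun t x y => mTY nx Q t y * mXY Q x y / mY nx Q y).
  assert (Hm : forall t x y, in_dom nx ny t x y ->
             0 < mY nx Q y /\ 0 < mTY nx Q t y /\ 0 < mXY Q x y)
    by (intros; apply (marginals_pos nx ny); auto).
  assert (HR : pos_on nx ny R).
  { intros t x y Hd; destruct (Hm t x y Hd) as (? & ? & ?); unfold R.
    apply Rdiv_lt_0_compat; [apply Rmult_lt_0_compat|]; assumption. }
  assert (HsR : sum3 nx ny Q = sum3 nx ny R).
  { rewrite !sum3_swapYX; apply rsum_ext; intros t Ht; apply rsum_ext; intros y Hy.
    destruct (Hm t 0%nat y ltac:(repeat split; assumption)) as (? & _).
    rewrite (rsum_ext nx (fun x => R t x y) (fun x => mXY Q x y * (mTY nx Q t y / mY nx Q y)))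
      by (intros; unfold R, Rdiv; ring).
    rewrite rsum_scalr; unfold mXY; rewrite <- rsum_swap; fold (mY nx Q y).
    fold (mTY nx Q t y); field; lra. }
  assert (Hkl : sum3 nx ny (fun t x y => Q t x y * ln (Q t x y / R t x y)) = 0).
  { rewrite <- HC; apply sum3_ext; intros t x y Hd.
    destruct (Hm t x y Hd) as (? & ? & ?); pose proof (Hp t x y Hd).
    unfold plog, R; destruct (Rle_dec (Q t x y) 0); [lra|].
    do 2 f_equal; field; repeat split; lra. }
  intros t x y Hd; destruct (Hm t x y Hd) as (? & ? & ?).
  rewrite (sum3_kl_eq0 nx ny Q R Hp HR HsR Hkl t x y Hd); unfold R; field; lra.
Qed.

(* Pushing Qt slightly away from a Q in Delta_P with Q t x y > 0 stays in the affine hull,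
   hence (by relative interiority) in Delta_P; nonnegativity there forces Qt t x y > 0. *)
Lemma relint_pos nx ny P Qt :
  full_supp nx ny P -> in_relint_DeltaP nx ny P Qt -> pos_on nx ny Qt.
Proof.
  intros Hfs [HD [eps [Heps Hrel]]] t x y Hd.
  destruct (Hfs t x y Hd) as [Q [HQ Hpos]].
  pose (d := eps / 2).
  pose (R0 := fun t x y => (1 + d) * Qt t x y + (- d * Q t x y + 0)).
  assert (HR0 : DeltaP nx ny P R0).
  { apply Hrel.
    - exists [(1 + d, Qt); (- d, Q)]; split; [|split].
      + intros p [<- | [<- | []]]; assumption.
      + simpl; ring.
      + reflexivity.
    - intros t' x' y' Hd'.
      destruct HD as [[HQt HsQt] _], HQ as [[HQQ HsQ] _].
      pose proof (le_sum3 nx ny Qt HQt t' x' y' Hd'); pose proof (le_sum3 nx ny Q HQQ t' x' y' Hd').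
      pose proof (HQt _ _ _ Hd'); pose proof (HQQ _ _ _ Hd').
      fold (sum3 nx ny Qt) in HsQt; fold (sum3 nx ny Q) in HsQ.
      unfold R0, d; unfold Rabs; destruct Rcase_abs; nra. }
  pose proof (DeltaP_nonneg _ _ _ _ HR0 t x y Hd); unfold R0, d in *; nra.
Qed.

Definition vec3 (a b c : R) (k : nat) : R :=
  match k with 0%nat => a | 1%nat => b | 2%nat => c | _ => 0 end.

Lemma vec3_support a b c k : (3 <= k)%nat -> vec3 a b c k = 0.
Proof. intros Hk; do 3 (destruct k as [|k]; [lia|]); reflexivity. Qed.

Lemma exists_zero_sum_vector n : (2 <= n)%nat -> exists u, rsum n u = 0 /\ u 0%nat <> 0.
Proof.
  intros Hn; exists (vec3 1 (-1) 0); split; [|simpl; lra].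
  rewrite (rsum_support n 2) by (assumption || intros [|[|[|k]]] Hk; reflexivity || lia).
  simpl; ring.
Qed.

Lemma exists_kernel_vector n (a : nat -> R) : (3 <= n)%nat ->
  exists v, rsum n v = 0 /\ rsum n (fun y => a y * v y) = 0 /\ exists j, (j < n)%nat /\ v j <> 0.
Proof.
  intros Hn.
  assert (Hsupp : forall v0 v1 v2,
            rsum n (vec3 v0 v1 v2) = v0 + v1 + v2 /\
            rsum n (fun y => a y * vec3 v0 v1 v2 y) = a 0%nat * v0 + a 1%nat * v1 + a 2%nat * v2).
  { intros; rewrite !(rsum_support n 3) by
      (assumption || intros k Hk; rewrite vec3_support by assumption; ring).
    simpl; split; ring. }
  destruct (Req_dec (a 0%nat) (a 1%nat)) as [E|E].
  - exists (vec3 1 (-1) 0); rewrite !(proj1 (Hsupp _ _ _)), (proj2 (Hsupp _ _ _)), E.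
    split; [ring|split; [ring|exists 0%nat; split; [lia|simpl; lra]]].
  - exists (vec3 (a 2%nat - a 1%nat) (a 0%nat - a 2%nat) (a 1%nat - a 0%nat)).
    rewrite (proj1 (Hsupp _ _ _)), (proj2 (Hsupp _ _ _)).
    split; [ring|split; [ring|exists 2%nat; split; [lia|simpl; lra]]].
Qed.

Lemma uniform_small n (P : nat -> R -> Prop) :
  (forall k, (k < n)%nat -> exists e, 0 < e /\ forall e', 0 < e' <= e -> P k e') ->
  exists e, 0 < e /\ forall k, (k < n)%nat -> forall e', 0 < e' <= e -> P k e'.
Proof.
  induction n as [|n IH]; intros H.
  - exists 1; split; [lra | intros; lia].
  - destruct (IH (fun k Hk => H k ltac:(lia))) as [e1 [He1 H1]].
    destruct (H n ltac:(lia)) as [e2 [He2 H2]].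
    exists (Rmin e1 e2); split; [apply Rmin_pos; assumption|].
    pose proof (Rmin_l e1 e2); pose proof (Rmin_r e1 e2).
    intros k Hk e' He'; destruct (Nat.eq_dec k n) as [->|Hne].
    + apply H2; lra.
    + apply H1; [lia | lra].
Qed.

Lemma small_shift_nonneg q d :
  0 < q -> exists e, 0 < e /\ forall e', 0 < e' <= e -> 0 <= q + e' * d.
Proof.
  intros Hq; pose proof (Rabs_pos d); exists (q / (1 + Rabs d)).
  split; [apply Rdiv_lt_0_compat; lra|]; intros e' He'.
  assert (q / (1 + Rabs d) * Rabs d <= q).
  { apply (Rmult_le_reg_r (1 + Rabs d)); [lra|].
    replace (q / (1 + Rabs d) * Rabs d * (1 + Rabs d)) with (q * Rabs d) by (field; lra); nra. }
  pose proof (Rle_abs (- d)); rewrite Rabs_Ropp in *; nra.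
Qed.

Lemma small_perturbation_nonneg nx ny (Q D : jfun) : pos_on nx ny Q ->
  exists eps, 0 < eps /\ nonneg_on nx ny (fun t x y => Q t x y + eps * D t x y).
Proof.
  intros HQ.
  destruct (uniform_small nT (fun t e => forall x y, (x < nx)%nat -> (y < ny)%nat ->
                                           0 <= Q t x y + e * D t x y)) as [e [He H]].
  - intros t Ht.
    destruct (uniform_small nx (fun x e => forall y, (y < ny)%nat -> 0 <= Q t x y + e * D t x y))
      as [e [He H]].
    + intros x Hx.
      destruct (uniform_small ny (fun y e => 0 <= Q t x y + e * D t x y)) as [e [He H]].
      * intros y Hy; apply small_shift_nonneg, HQ; repeat split; assumption.
      * exists e; split; [assumption|]; intros e' He' y Hy; exact (H y Hy e' He').
    + exists e; split; [assumption|]; intros e' He' x y Hx Hy; exact (H x Hx e' He' y Hy).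
  - exists e; split; [assumption|]; intros t x y (Ht & Hx & Hy).
    apply H; [assumption | lra | assumption | assumption].
Qed.

Definition shift (Q D : jfun) (c : R) : jfun := fun t x y => Q t x y + c * D t x y.

Lemma mTX_shift ny Q D c t x : mTX ny (shift Q D c) t x = mTX ny Q t x + c * mTX ny D t x.
Proof. unfold mTX, shift; rewrite rsum_plus, rsum_scal; reflexivity. Qed.

Lemma mTY_shift nx Q D c t y : mTY nx (shift Q D c) t y = mTY nx Q t y + c * mTY nx D t y.
Proof. unfold mTY, shift; rewrite rsum_plus, rsum_scal; reflexivity. Qed.

Lemma mXY_shift Q D c x y : mXY (shift Q D c) x y = mXY Q x y + c * mXY D x y.
Proof. unfold mXY, shift; rewrite rsum_plus, rsum_scal; reflexivity. Qed.

Lemma DeltaP_of_marginals nx ny P Q Q' :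
  DeltaP nx ny P Q -> nonneg_on nx ny Q' ->
  (forall t x, (t < nT)%nat -> (x < nx)%nat -> mTX ny Q' t x = mTX ny Q t x) ->
  (forall t y, (t < nT)%nat -> (y < ny)%nat -> mTY nx Q' t y = mTY nx Q t y) ->
  DeltaP nx ny P Q'.
Proof.
  intros [[_ Hs] [HX HY]] HQ' HX' HY'; split; [split|split]; [assumption| | |].
  - rewrite <- Hs; apply rsum_ext; intros t Ht; apply rsum_ext; intros x Hx; apply HX'; assumption.
  - intros; rewrite HX'; auto.
  - intros; rewrite HY'; auto.
Qed.

Definition condTY nx (Q : jfun) (t y : nat) : R := mTY nx Q t y / mY nx Q y.

Section Perturbation.
Variables (nx ny : nat) (Q : jfun) (u v : nat -> R).
Hypothesis Ypos : forall y, (y < ny)%nat -> 0 < mY nx Q y.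
Hypothesis u_sum : rsum nx u = 0.
Hypothesis v_sum : rsum ny v = 0.
Hypothesis v_orth : rsum ny (fun y => condTY nx Q 0 y * v y) = 0.

Definition pdir : jfun := fun t x y => condTY nx Q t y * u x * v y.

Lemma condTY_sum y : (y < ny)%nat -> condTY nx Q 0 y + condTY nx Q 1 y = 1.
Proof.
  intros Hy; pose proof (Ypos y Hy); unfold condTY.
  rewrite (mY_split nx Q y) in *; field; lra.
Qed.

Lemma mTY_pdir t y : mTY nx pdir t y = 0.
Proof.
  unfold mTY, pdir.
  rewrite (rsum_ext _ _ (fun x => (condTY nx Q t y * v y) * u x)) by (intros; ring).
  rewrite rsum_scal, u_sum; ring.
Qed.

Lemma mTX_pdir t x : (t < nT)%nat -> mTX ny pdir t x = 0.
Proof.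
  intros Ht; unfold mTX, pdir.
  rewrite (rsum_ext _ _ (fun y => u x * (condTY nx Q t y * v y))) by (intros; ring).
  rewrite rsum_scal; unfold nT in Ht; destruct t as [|[|t]]; [| |lia].
  - rewrite v_orth; ring.
  - rewrite (rsum_ext _ _ (fun y => v y - condTY nx Q 0 y * v y))
      by (intros y Hy; pose proof (condTY_sum y Hy);
          replace (condTY nx Q 1 y) with (1 - condTY nx Q 0 y) by lra; ring).
    rewrite rsum_minus, v_sum, v_orth; ring.
Qed.

Lemma mXY_pdir x y : (y < ny)%nat -> mXY pdir x y = u x * v y.
Proof.
  intros Hy; transitivity (u x * v y * (condTY nx Q 0 y + condTY nx Q 1 y)).
  - unfold mXY, pdir, nT; simpl; ring.
  - rewrite condTY_sum by assumption; ring.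
Qed.

Lemma DeltaP_shift_pdir P eps :
  DeltaP nx ny P Q -> nonneg_on nx ny (shift Q pdir eps) -> DeltaP nx ny P (shift Q pdir eps).
Proof.
  intros HD HQ'; apply (DeltaP_of_marginals _ _ _ Q); [assumption | assumption | |].
  - intros t x Ht _; rewrite mTX_shift, mTX_pdir by assumption; ring.
  - intros t y _ _; rewrite mTY_shift, mTY_pdir; ring.
Qed.

Lemma ci_shift_pdir eps : ci_TX_Y nx ny Q -> ci_TX_Y nx ny (shift Q pdir eps).
Proof.
  intros Hci t x y Hd; pose proof (Ypos y (proj2 (proj2 Hd))).
  assert (HmY : mY nx (shift Q pdir eps) y = mY nx Q y)
    by (rewrite !mY_split, !mTY_shift, !mTY_pdir; ring).
  rewrite HmY, mTY_shift, mTY_pdir, mXY_shift, mXY_pdir by exact (proj2 (proj2 Hd)).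
  unfold shift, pdir, condTY; rewrite Rmult_plus_distr_r, Hci by assumption.
  field; lra.
Qed.

End Perturbation.

Lemma argmax_condH_not_unique_X nx ny P Qt :
  (2 <= nx)%nat -> (3 <= ny)%nat -> pos_on nx ny Qt ->
  is_argmax_condH nx ny P Qt -> UI_X_minus_Y nx ny P 0 ->
  exists Q', is_argmax_condH nx ny P Q' /\
    exists t x y, in_dom nx ny t x y /\ Q' t x y <> Qt t x y.
Proof.
  intros Hnx Hny Hpos Harg HUI.
  pose proof (proj1 Harg) as HD; pose proof (DeltaP_nonneg _ _ _ _ HD) as Hnn.
  pose proof (ci_of_CMI_TX_Y_eq0 nx ny Qt (proj1 HD) Hpos
                (CMI_eq0_of_argmax_condH nx ny P Qt HUI Harg)) as Hci.
  assert (Hm : forall t y, (t < nT)%nat -> (y < ny)%nat -> 0 < mY nx Qt y /\ 0 < mTY nx Qt t y).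
  { intros t y Ht Hy; assert (Hd : in_dom nx ny t 0 y) by (repeat split; lia).
    destruct (marginals_pos nx ny Qt Hnn t 0 y Hd (Hpos t 0%nat y Hd)) as (? & ? & _); split; assumption. }
  destruct (exists_zero_sum_vector nx Hnx) as [u [Hu Hu0]].
  destruct (exists_kernel_vector ny (condTY nx Qt 0) Hny) as [v [Hv [Horth [j [Hj Hvj]]]]].
  destruct (small_perturbation_nonneg nx ny Qt (pdir nx Qt u v) Hpos) as [eps [Heps Hnn']].
  exists (shift Qt (pdir nx Qt u v) eps); split.
  - assert (Ypos : forall y, (y < ny)%nat -> 0 < mY nx Qt y)
      by (intros y Hy; apply (Hm 0%nat y); [unfold nT|]; lia).
    apply argmax_condH_of_CMI_eq0; [assumption | |].
    + apply DeltaP_shift_pdir with (ny := ny); assumption.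
    + apply CMI_TX_Y_eq0_of_ci; [assumption|]; apply ci_shift_pdir; assumption.
  - exists 0%nat, 0%nat, j; split; [repeat split; unfold nT; lia|].
    destruct (Hm 0%nat j ltac:(unfold nT; lia) Hj).
    assert (0 < condTY nx Qt 0 j) by (apply Rdiv_lt_0_compat; assumption).
    unfold shift, pdir; intros E.
    assert (eps * (condTY nx Qt 0 j * u 0%nat * v j) = 0) as E' by lra.
    apply Rmult_integral in E' as [E'|E']; [lra|].
    apply Rmult_integral in E' as [E'|E']; [|contradiction].
    apply Rmult_integral in E' as [E'|E']; [lra|contradiction].
Qed.

Definition swapXY (Q : jfun) : jfun := fun t x y => Q t y x.

Lemma sum3_swapXY nx ny f : sum3 ny nx (swapXY f) = sum3 nx ny f.
Proof. symmetry; apply sum3_swapYX. Qed.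

Lemma DeltaP_swapXY nx ny P Q : DeltaP nx ny P Q -> DeltaP ny nx (swapXY P) (swapXY Q).
Proof.
  intros [[Hn Hs] [HX HY]]; split; [split|split]; [| | exact HY | exact HX].
  - intros t x y (Ht & Hx & Hy); apply Hn; repeat split; assumption.
  - rewrite <- Hs; exact (sum3_swapXY nx ny Q).
Qed.

Lemma condH_swapXY nx ny Q : condH ny nx (swapXY Q) = condH nx ny Q.
Proof. unfold condH; f_equal; apply (sum3_swapXY nx ny). Qed.

Lemma CMI_TX_Y_swapXY nx ny Q : CMI_TX_Y ny nx (swapXY Q) = CMI_TY_X nx ny Q.
Proof. apply (sum3_swapXY nx ny). Qed.

Lemma argmax_condH_swapXY nx ny P Q :
  is_argmax_condH nx ny P Q -> is_argmax_condH ny nx (swapXY P) (swapXY Q).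
Proof.
  intros [HD Hmax]; split; [apply DeltaP_swapXY; assumption|]; intros Q' HD'.
  change (condH ny nx (swapXY (swapXY Q')) <= condH ny nx (swapXY Q)).
  rewrite (condH_swapXY nx ny (swapXY Q')), (condH_swapXY nx ny Q); apply Hmax.
  exact (DeltaP_swapXY ny nx (swapXY P) Q' HD').
Qed.

Lemma UI_swapXY nx ny P : UI_Y_minus_X nx ny P 0 -> UI_X_minus_Y ny nx (swapXY P) 0.
Proof.
  intros [[Q [HD HC]] Hmin]; split.
  - exists (swapXY Q); split; [apply DeltaP_swapXY; assumption|].
    rewrite CMI_TX_Y_swapXY; assumption.
  - intros Q' HD'; change (0 <= CMI_TX_Y ny nx (swapXY (swapXY Q'))).
    rewrite CMI_TX_Y_swapXY; apply Hmin.
    exact (DeltaP_swapXY ny nx (swapXY P) Q' HD').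
Qed.

Theorem mainTheorem13 (nx ny : nat) (P Qt : nat -> nat -> nat -> R) :
  (2 <= nx)%nat -> (2 <= ny)%nat ->
  is_dist nx ny P ->
  full_supp nx ny P ->
  in_relint_DeltaP nx ny P Qt ->
  is_argmax_condH nx ny P Qt ->
  ((UI_X_minus_Y nx ny P 0 /\ (2 < ny)%nat) \/
   (UI_Y_minus_X nx ny P 0 /\ (2 < nx)%nat)) ->
  exists Q', is_argmax_condH nx ny P Q' /\
    exists t x y, in_dom nx ny t x y /\ Q' t x y <> Qt t x y.
Proof.
  intros Hnx Hny _ Hfs Hri Harg [[HUI Hy] | [HUI Hx]].
  - apply argmax_condH_not_unique_X; try assumption.
    exact (relint_pos nx ny P Qt Hfs Hri).
  - destruct (argmax_condH_not_unique_X ny nx (swapXY P) (swapXY Qt))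
      as [Q' [HQ' [t [y [x [(Ht & Hy & Hx') Hne]]]]]].
    + assumption.
    + assumption.
    + intros t y x (Ht & Hy & Hx'); apply (relint_pos nx ny P Qt Hfs Hri); repeat split; assumption.
    + apply argmax_condH_swapXY; assumption.
    + apply UI_swapXY; assumption.
    + exists (swapXY Q'); split.
      * exact (argmax_condH_swapXY ny nx (swapXY P) Q' HQ').
      * exists t, x, y; split; [repeat split|]; assumption.
Qed.
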